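(* Let $K$ be an algebraically closed field, $K\subset K'$ a field extension and $x=(x_1,\ldots,x_n)$. Let $J_1,\ldots,J_p$ be subsets of $\{1,\ldots,n\}$, $x_{J_i}=(x_k)_{k\in J_i}$, and $A_i=K[x_{J_i}]_{(x_{J_i})}$, $A'_i=K'[x_{J_i}]_{(x_{J_i})}$ for $i\in\{1,\ldots,p\}$. Set $\mathcal{N}=A_1\times\cdots\times A_p$ and $\mathcal{N}'=A'_1\times\cdots\times A'_p$. Let $f$ be a finite system of polynomials in $K[x]_{(x)}[Y]$, $Y=(Y_1,\ldots,Y_p)$, and let $\hat y\in\mathcal{N}'$ satisfy $f(\hat y)=0$. Then there exists $y\in\mathcal{N}$ such that $f(y)=0$ and $\operatorname{ord} y_i=\operatorname{ord}\hat y_i$ for all $i\in\{1,\ldots,p\}$.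
   Context: $K[x_{J}]_{(x_J)}$ denotes the localization of the polynomial ring $K[x_J]$ at the maximal ideal generated by the variables $x_J$. For an element $g$ of such a local ring, $\operatorname{ord} g$ is its $(x)$-adic order, i.e. the largest $k$ with $g\in(x)^k$ (the least degree of a monomial with nonzero coefficient in its power series expansion), with $\operatorname{ord}0=\infty$. *)

From HB Require Import structures.
From mathcomp Require Import all_boot all_order all_algebra.
From mathcomp Require Import fraction.
From mathcomp Require Import mpoly.
Set Implicit Arguments. Unset Strict Implicit. Unset Printing Implicit Defensive.
Import GRing.Theory.
Local Open Scope ring_scope.

(* Variables x_1..x_n are indexed by 'I_n = {0,..,n-1}.
   All local rings K'[x_J]_(x_J) are realised inside the field of fractions
   FF K' n = K'(x_1,..,x_n) of the polynomial ring K'[x_1,..,x_n]. *)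
Notation FF K' n := {fraction {mpoly K'[n]}}.
Notation "x %:F" := (@FracField.tofrac _ x) : ring_scope.

Section Loc.
Context (n : nat).

Definition vars_in (R : nzRingType) (J : {set 'I_n}) (a : {mpoly R[n]}) : Prop :=
  forall m, m \in msupp a -> forall k, k \notin J -> m k = 0%N.

(* c belongs to K'[x_J]_(x_J): c = a/b with a, b in K'[x_J], b(0) <> 0 *)
Definition in_loc (K' : fieldType) (J : {set 'I_n}) (c : FF K' n) : Prop :=
  exists a b : {mpoly K'[n]},
    [/\ vars_in J a, vars_in J b, b@_0%MM != 0 & c = a%:F / b%:F].

(* c belongs to the image of K[x_J]_(x_J) in K'[x_J]_(x_J) under the
   embedding induced by iota : K -> K' *)
Definition in_loc_img (K K' : fieldType) (iota : {rmorphism K -> K'})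
    (J : {set 'I_n}) (c : FF K' n) : Prop :=
  exists a b : {mpoly K[n]},
    [/\ vars_in J a, vars_in J b, b@_0%MM != 0 &
        c = (map_mpoly iota a)%:F / (map_mpoly iota b)%:F].

(* c lies in (x)^k, the k-th power of the maximal ideal of K'[x]_(x) *)
Definition in_mpow (K' : fieldType) (c : FF K' n) (k : nat) : Prop :=
  exists a b : {mpoly K'[n]},
    [/\ b@_0%MM != 0, c = a%:F / b%:F &
        forall m, m \in msupp a -> (k <= mdeg m)%N].

(* ord c = ord d, where ord g = largest k with g in (x)^k (or infinity) *)
Definition same_ord (K' : fieldType) (c d : FF K' n) : Prop :=
  forall k, in_mpow c k <-> in_mpow d k.

End Loc.

(* Write each [yhat i] as [a i / b i] with [a i, b i] in [K'[x_J]] and [b i (0) <> 0].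
   The finitely many coefficients of the [a i] and [b i] are the values of an evaluation
   [E : K[t_0, ..., t_(r-1)] -> K'].  Because [K] is algebraically closed, [E] has
   [K]-rational specializations: for any [s] with [E s <> 0] there is a [K]-algebra
   morphism [F] into [K] with [ker E <= ker F] and [F s <> 0]; this is proved one
   variable at a time, according as the new generator is transcendental or algebraic
   over the previous ones.  Specializing the lifted [a i] and [b i] along [F] preserves
   every polynomial relation with coefficients in [K(x)], so [f(y) = 0]; taking for [s]
   the product of the [b i (0)] and of one minimal-degree coefficient of each [a i]
   keeps the denominators units and every order unchanged. *)

From HB Require Import structures.
From mathcomp Require Import all_boot all_order all_algebra.
From mathcomp Require Import fraction.
From mathcomp Require Import mpoly.
From Stdlib Require Import Classical Wf_nat.
Set Implicit Arguments. Unset Strict Implicit. Unset Printing Implicit Defensive.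
Import GRing.Theory.
Local Open Scope ring_scope.

Lemma size_map_poly_le (R S : nzRingType) (f : {additive R -> S}) (p : {poly R}) :
  (size (map_poly f p) <= size p)%N.
Proof. by apply/leq_sizeP => j hj; rewrite coef_map (nth_default _ hj) raddf0. Qed.

Lemma map_poly_ker (R S T : nzRingType) (f : {additive R -> S}) (g : {additive R -> T})
    (p : {poly R}) :
  (forall u, f u = 0 -> g u = 0) -> map_poly f p = 0 -> map_poly g p = 0.
Proof.
move=> kerfg fp0; apply/polyP => i; rewrite coef_map coef0; apply: kerfg.
by rewrite -coef_map fp0 coef0.
Qed.

Lemma map_poly_trim (R S : nzRingType) (f : {additive R -> S}) (p : {poly R}) :
  exists2 q, map_poly f q = map_poly f p & size q = size (map_poly f p).
Proof.
have fq : map_poly f (take_poly (size (map_poly f p)) p) = map_poly f p.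
  apply/polyP => i; rewrite !coef_map coef_take_poly; case: ltnP => // le.
  by rewrite raddf0 -coef_map nth_default.
exists (take_poly (size (map_poly f p)) p) => //; apply/eqP.
by rewrite eqn_leq size_take_poly /= -{1}fq size_map_poly_le.
Qed.

Lemma map_divp_eq (R : idomainType) (S : nzRingType) (f : {rmorphism R -> S})
    (p q : {poly R}) :
  f (lead_coef q) ^+ scalp p q *: map_poly f p
    = map_poly f (p %/ q) * map_poly f q + map_poly f (p %% q).
Proof. by rewrite -rmorphXn -map_polyZ Pdiv.Idomain.divp_eq rmorphD rmorphM. Qed.

Lemma roots_dvdp_exp (K : closedFieldType) (p q : {poly K}) : p != 0 ->
  (forall z, root p z -> root q z) -> p %| q ^+ size p.
Proof.
elim: {p}(size p) {-2}p (leqnn (size p)) => [|k IH] p.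
  by rewrite leqn0 size_poly_eq0 => ->.
move=> szp p0 pq; have [/eqP p1|p1] := eqVneq (size p) 1%N.
  have [c c0 ->] : exists2 c, c != 0 & p = c%:P by apply/size_poly1P; rewrite p1.
  by rewrite -[c%:P]mulr1 mul_polyC dvdpZl // dvd1p.
have [z pz] := closed_rootP p p1.
have /divpK pE : 'X - z%:P %| p by rewrite dvdp_XsubCl.
set p1' := p %/ _ in pE.
have p1'0 : p1' != 0 by apply: contraNneq p0 => e; rewrite -pE e mul0r.
have szpE : size p = (size p1').+1.
  by rewrite -pE size_Mmonic ?monicXsubC // size_XsubC addn2.
rewrite szpE -{1}pE exprS mulrC dvdp_mul //; first by rewrite dvdp_XsubCl pq.
apply: IH => //; first by rewrite -ltnS -szpE.
by move=> w p1'w; apply: pq; rewrite -pE rootM p1'w.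
Qed.

Definition horner_at (R : nzRingType) (L : comNzRingType) (f : {rmorphism R -> L}) (t : L)
    : {rmorphism {poly R} -> L} :=
  horner_morph (fun x => mulrC t (f x)).

Lemma horner_atE (R : nzRingType) (L : comNzRingType) (f : {rmorphism R -> L}) t p :
  horner_at f t p = (map_poly f p).[t].
Proof. by []. Qed.

Lemma horner_atC (R : nzRingType) (L : comNzRingType) (f : {rmorphism R -> L}) t c :
  horner_at f t c%:P = f c.
Proof. by rewrite horner_atE map_polyC hornerC. Qed.

Definition specializable (K : fieldType) (R : nzRingType) (L : nzRingType)
    (kappa : K -> R) (E : {rmorphism R -> L}) :=
  forall s, E s != 0 -> exists F : {rmorphism R -> K},
    [/\ forall c, F (kappa c) = c, forall u, E u = 0 -> F u = 0 & F s != 0].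

Lemma specializable_id (K L : fieldType) (iota : {rmorphism K -> L}) :
  specializable (@idfun K) iota.
Proof.
move=> s; rewrite fmorph_eq0 => s0; exists (idfun : {rmorphism K -> K}).
by split => // u /eqP; rewrite fmorph_eq0 => /eqP.
Qed.

Section SpecializePoly.
Variables (K : closedFieldType) (L : fieldType) (R : idomainType).
Variables (kappa : K -> R) (E : {rmorphism R -> L}) (t : L).
Hypothesis specE : specializable kappa E.

Lemma specialize_poly_neq0 w (q : {poly R}) : E w != 0 -> map_poly E q != 0 ->
  exists F : {rmorphism R -> K}, [/\ forall c, F (kappa c) = c,
    forall u, E u = 0 -> F u = 0, F w != 0 & map_poly F q != 0].
Proof.
set j := (size (map_poly E q)).-1 => Ew Eq.
have Eqj : E q`_j != 0 by rewrite -coef_map -lead_coefE lead_coef_eq0.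
have /specE[F [Fk kerF]] : E (w * q`_j) != 0 by rewrite rmorphM mulf_neq0.
rewrite rmorphM mulf_eq0 negb_or => /andP[Fw Fqj]; exists F; split => //.
by apply: contraNneq Fqj => Fq0; rewrite -coef_map Fq0 coef0.
Qed.

Lemma specializable_transcendental :
  (forall q, (map_poly E q).[t] = 0 -> map_poly E q = 0) ->
  specializable (polyC \o kappa) (horner_at E t).
Proof.
move=> transc s; rewrite horner_atE => Es.
have [||F [Fk kerF _ /closed_nonrootP[z Fsz]]] := specialize_poly_neq0 (w := 1) (q := s).
- by rewrite rmorph1 oner_eq0.
- by apply: contraNneq Es => ->; rewrite horner0.
exists (horner_at F z); split => [c|u|] /=; first by rewrite horner_atC Fk.
  by rewrite !horner_atE => /transc /(map_poly_ker kerF) ->; rewrite horner0.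
exact: Fsz.
Qed.

(* [p] plays the role of the minimal polynomial of [t] over [E R]. *)
Lemma specializable_algebraic (p : {poly R}) :
  E (lead_coef p) != 0 -> (map_poly E p).[t] = 0 ->
  (forall q, (map_poly E q).[t] = 0 -> map_poly E q != 0 ->
     (size p <= size (map_poly E q))%N) ->
  specializable (polyC \o kappa) (horner_at E t).
Proof.
move=> Ea pt pmin s; rewrite horner_atE => Es.
have p0 : p != 0 by apply: contraNneq Ea => ->; rewrite lead_coef0 rmorph0.
have Emod u : (map_poly E u).[t] = 0 -> map_poly E (u %% p) = 0.
  move=> ut; have := congr1 (horner^~ t) (map_divp_eq E u p).
  rewrite hornerZ ut mulr0 hornerD hornerM pt mulr0 add0r => /esym modt.
  have [//|/(pmin _ modt) le_p_mod] := eqVneq (map_poly E (u %% p)) 0.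
  by have := leq_trans le_p_mod (size_map_poly_le E _); rewrite leqNgt ltn_modp p0.
set r0 := s ^+ size p %% p.
have Er0 : map_poly E r0 != 0.
  apply: contraNneq Es => r00.
  have := congr1 (horner^~ t) (map_divp_eq E (s ^+ size p) p).
  rewrite -/r0 r00 addr0 hornerZ hornerM pt mulr0 rmorphXn horner_exp.
  by move/eqP; rewrite mulf_eq0 !expf_eq0 (negbTE Ea) andbF /= => /andP[].
have [F [Fk kerF Fa Fr0]] := specialize_poly_neq0 Ea Er0.
have szFp : size (map_poly F p) = size p by rewrite size_map_poly_id0.
have [z Fpz Fsz] : exists2 z, root (map_poly F p) z & ~~ root (map_poly F s) z.
  apply: NNPP => noz.
  have : map_poly F p %| map_poly F s ^+ size p.
    rewrite -szFp roots_dvdp_exp -?size_poly_eq0 ?szFp ?size_poly_eq0 // => w Fpw.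
    by apply: NNPP => /negP Fsw; apply: noz; exists w.
  rewrite -rmorphXn -(dvdpZr _ _ (expf_neq0 (scalp (s ^+ size p) p) Fa)) map_divp_eq.
  rewrite dvdp_addr ?dvdp_mull // => /(dvdp_leq Fr0); rewrite szFp leqNgt.
  by rewrite (leq_ltn_trans (size_map_poly_le _ _)) ?ltn_modp.
exists (horner_at F z); split => [c|u|] /=; first by rewrite horner_atC Fk.
  rewrite !horner_atE => /Emod/(map_poly_ker kerF) Fmod.
  have := congr1 (horner^~ z) (map_divp_eq F u p).
  rewrite Fmod addr0 hornerZ hornerM (rootP Fpz) mulr0 => /eqP.
  by rewrite mulf_eq0 expf_eq0 (negbTE Fa) andbF => /eqP.
by rewrite horner_atE.
Qed.

Lemma specializable_poly : specializable (polyC \o kappa) (horner_at E t).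
Proof.
have [alg|transc] :=
  classic (exists q, map_poly E q != 0 /\ (map_poly E q).[t] = 0); last first.
  apply: specializable_transcendental => q qt; apply: NNPP => q0.
  by apply: transc; exists q; split => //; apply/eqP.
pose S k := exists q,
  [/\ map_poly E q != 0, (map_poly E q).[t] = 0 & size (map_poly E q) = k].
have [|k [[[q [q0 qt <-]] qmin] _]] :=
  dec_inh_nat_subset_has_unique_least_element S (fun k => classic (S k)).
  by have [q [q0 qt]] := alg; exists (size (map_poly E q)), q.
have [p Ep szp] := map_poly_trim E q.
apply: (@specializable_algebraic p); rewrite ?Ep //.
  by rewrite lead_coefE -coef_map Ep szp -lead_coefE lead_coef_eq0.
by move=> q' q't q'0; rewrite szp; apply/leP/qmin; exists q'.
Qed.

End SpecializePoly.

Section IteratedPoly.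
Variable K : fieldType.

Fixpoint ipoly (r : nat) : idomainType :=
  if r is r'.+1 then {poly ipoly r'} else K.

Fixpoint ipoly_const (r : nat) : {rmorphism K -> ipoly r} :=
  match r return {rmorphism K -> ipoly r} with
  | 0 => idfun
  | r'.+1 => (polyC \o ipoly_const r' : {rmorphism K -> {poly ipoly r'}})
  end.

Fixpoint ipoly_var (r j : nat) : ipoly r :=
  match r return ipoly r with
  | 0 => 0
  | r'.+1 => if j == r' then 'X else (ipoly_var r' j)%:P
  end.

Variables (L : fieldType) (iota : {rmorphism K -> L}).

Fixpoint ipoly_eval (ts : nat -> L) (r : nat) : {rmorphism ipoly r -> L} :=
  match r return {rmorphism ipoly r -> L} with
  | 0 => iota
  | r'.+1 => horner_at (ipoly_eval ts r') (ts r')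
  end.

Lemma ipoly_eval_const ts r c : ipoly_eval ts r (ipoly_const r c) = iota c.
Proof. by elim: r => //= r IH; rewrite horner_atC. Qed.

Lemma ipoly_eval_var ts r j : (j < r)%N -> ipoly_eval ts r (ipoly_var r j) = ts j.
Proof.
elim: r => // r IH /=; rewrite ltnS leq_eqVlt; case: eqP => [->|_] /= jr.
  by rewrite horner_atE map_polyX hornerX.
by rewrite horner_atC IH.
Qed.

Lemma ipoly_lift_seq (l : seq L) : exists r ts (lift : L -> ipoly r),
  lift 0 = 0 /\ {in l, forall x, ipoly_eval ts r (lift x) = x}.
Proof.
exists (size l), (nth 0 l).
exists (fun x => if x == 0 then 0 else ipoly_var (size l) (index x l)).
rewrite eqxx; split => // x xl; case: eqP => [->|_]; first by rewrite rmorph0.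
by rewrite ipoly_eval_var ?index_mem // nth_index.
Qed.

End IteratedPoly.

Lemma ipoly_eval_specializable (K : closedFieldType) (L : fieldType)
    (iota : {rmorphism K -> L}) ts r :
  specializable (ipoly_const K r) (ipoly_eval iota ts r).
Proof.
elim: r => [|r IH]; first exact: specializable_id.
exact: specializable_poly.
Qed.

Section MpolyLift.
Variables (R S : nzRingType) (n : nat) (lift : S -> R).
Hypothesis lift0 : lift 0 = 0.

Definition mlift (q : {mpoly S[n]}) : {mpoly R[n]} :=
  \sum_(m <- msupp q) lift q@_m *: 'X_[m].

Lemma mcoeff_mlift q m : (mlift q)@_m = lift q@_m.
Proof.
rewrite /mlift raddf_sum /=; under eq_bigr do rewrite mcoeffZ mcoeffX.
have [mq|mNq] := boolP (m \in msupp q).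
  rewrite (bigD1_seq m) ?msupp_uniq //= eqxx mulr1 big1 ?addr0 // => m' m'm.
  by rewrite (negbTE m'm) mulr0.
rewrite big1_seq ?(memN_msupp_eq0 mNq) ?lift0 // => m' /andP[_ m'q].
by case: eqP m'q mNq => [->->|]; rewrite ?mulr0.
Qed.

Lemma msupp_mlift q : {subset msupp (mlift q) <= msupp q}.
Proof.
move=> m; rewrite !mcoeff_msupp mcoeff_mlift.
by apply: contraNneq => ->; rewrite lift0 eqxx.
Qed.

End MpolyLift.

Lemma ipoly_lift_mpoly (K L : fieldType) (iota : {rmorphism K -> L}) n
    (s : seq {mpoly L[n]}) :
  exists r ts (lift : {mpoly L[n]} -> {mpoly (ipoly K r)[n]}),
    forall q, q \in s -> map_mpoly (ipoly_eval iota ts r) (lift q) = q /\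
                         {subset msupp (lift q) <= msupp q}.
Proof.
have [r [ts [lift [lift0 liftK]]]] :=
  ipoly_lift_seq iota (flatten [seq [seq q@_m | m <- msupp q] | q <- s]).
exists r, ts, (mlift lift) => q qs; split; last exact: msupp_mlift.
apply/mpolyP => m; rewrite mcoeff_map_mpoly mcoeff_mlift //.
have [mq|mNq] := boolP (m \in msupp q); last by rewrite memN_msupp_eq0 // lift0 raddf0.
by apply: liftK; apply/flattenP; exists [seq q@_m | m <- msupp q]; apply: map_f.
Qed.

Section MonomialOrder.
Variable n : nat.

Lemma msupp_mdeg_min (R : nzRingType) (a : {mpoly R[n]}) : a != 0 ->
  exists2 m, m \in msupp a & {in msupp a, forall m', (mdeg m <= mdeg m')%N}.
Proof.
move=> a0; have exd : exists d, has (fun m => mdeg m == d) (msupp a).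
  by exists (mdeg (mlead a)); apply/hasP; exists (mlead a); rewrite ?mlead_supp.
case: (ex_minnP exd) => d /hasP[m ma /eqP <-] dmin.
by exists m => // m' m'a; apply: dmin; apply/hasP; exists m'.
Qed.

Lemma mcoeffM_mdeg_min (R : nzRingType) (a b : {mpoly R[n]}) m :
  {in msupp a, forall m', (mdeg m <= mdeg m')%N} -> (a * b)@_m = a@_m * b@_0.
Proof.
move=> mmin; rewrite mcoeffM (bigD1 (BMultinom (ltnSn (mdeg m)), bm0)) ?addm0 //=.
rewrite big1 ?addr0 // => -[[k1 k1b] [k2 k2b]] /= /andP[/eqP mE k12].
rewrite memN_msupp_eq0 ?mul0r //; apply/negP => /mmin.
rewrite mE mdegD -{2}[mdeg k1]addn0 leq_add2l leqn0 mdeg_eq0 => /eqP k20.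
by move: k12; rewrite xpair_eqE !bmeqP /= mE k20 addm0 !eqxx.
Qed.

Lemma in_mpow_frac (F : fieldType) (a b : {mpoly F[n]}) k : b@_0 != 0 ->
  in_mpow (a%:F / b%:F) k <-> {in msupp a, forall m, (k <= mdeg m)%N}.
Proof.
move=> b0; split => [[a' [b' [b'0 e a'k]]] m ma|]; last by exists a, b.
have nz (c : {mpoly F[n]}) : c@_0 != 0 -> c%:F != 0.
  by move=> c0; rewrite tofrac_eq0; apply: contraNneq c0 => ->; rewrite mcoeff0.
have ab' : a * b' = a' * b.
  by apply/eqP; rewrite -tofrac_eq !tofracM -eqr_div ?nz //; apply/eqP.
have [a0|] := eqVneq a 0; first by rewrite a0 msupp0 in ma.
case/msupp_mdeg_min => m0 m0a m0min; rewrite leqNgt; apply/negP => mk.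
have m0k : (mdeg m0 < k)%N by apply: leq_ltn_trans (m0min _ ma) mk.
have a'm0 : a'@_m0 = 0.
  by apply: memN_msupp_eq0; apply/negP => /a'k; rewrite leqNgt m0k.
have := congr1 (mcoeff m0) ab'; rewrite !mcoeffM_mdeg_min //; last first.
  by move=> m' /a'k; apply: leq_trans (ltnW m0k).
by rewrite a'm0 mul0r => /eqP; rewrite mulf_eq0 (negbTE b'0) orbF mcoeff_eq0 m0a.
Qed.

Lemma same_ord_frac (F : fieldType) (a b a' b' : {mpoly F[n]}) :
  b@_0 != 0 -> b'@_0 != 0 -> {subset msupp a' <= msupp a} ->
  {in msupp a, forall m, exists2 m', m' \in msupp a' & (mdeg m' <= mdeg m)%N} ->
  same_ord (a'%:F / b'%:F) (a%:F / b%:F).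
Proof.
move=> b0 b'0 a'a aa' k; rewrite !in_mpow_frac //; split => ak m ma; last exact/ak/a'a.
by have [m' /ak m'k m'm] := aa' m ma; apply: leq_trans m'm.
Qed.

End MonomialOrder.

Section FracImages.
Variables (R : nzRingType) (F : fieldType) (P1 P2 : {rmorphism R -> F}).

Definition frac_images (x x' : F) := exists u v,
  [/\ P1 v != 0, P2 v != 0, x = P1 u / P1 v & x' = P2 u / P2 v].

Lemma frac_images_rmorph u : frac_images (P1 u) (P2 u).
Proof. by exists u, 1; rewrite !rmorph1 !divr1 !oner_eq0. Qed.

Lemma frac_imagesD x y x' y' :
  frac_images x x' -> frac_images y y' -> frac_images (x + y) (x' + y').
Proof.
move=> [u1 [v1 [a1 b1 -> ->]]] [u2 [v2 [a2 b2 -> ->]]].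
exists (u1 * v2 + u2 * v1), (v1 * v2).
by rewrite !rmorphD !rmorphM !mulf_neq0 // !addf_div.
Qed.

Lemma frac_imagesM x y x' y' :
  frac_images x x' -> frac_images y y' -> frac_images (x * y) (x' * y').
Proof.
move=> [u1 [v1 [a1 b1 -> ->]]] [u2 [v2 [a2 b2 -> ->]]].
by exists (u1 * u2), (v1 * v2); rewrite !rmorphM !mulf_neq0 // !mulf_div.
Qed.

Lemma frac_images_meval p (g : {mpoly F[p]}) Y Y' :
  (forall m, frac_images g@_m g@_m) -> (forall i, frac_images (Y i) (Y' i)) ->
  frac_images g.@[Y] g.@[Y'].
Proof.
move=> gm YY'; rewrite !mevalE.
have fr0 := frac_images_rmorph 0; rewrite !rmorph0 in fr0.
have fr1 := frac_images_rmorph 1; rewrite !rmorph1 in fr1.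
apply: (big_ind2 frac_images fr0 (fun _ _ _ _ => @frac_imagesD _ _ _ _)) => m _.
apply: frac_imagesM => //.
apply: (big_ind2 frac_images fr1 (fun _ _ _ _ => @frac_imagesM _ _ _ _)) => i _.
by elim: (m i) => [|k IH]; rewrite ?expr0 // !exprS; apply: frac_imagesM.
Qed.

Lemma frac_images_eq0 x x' : (forall u, P1 u = 0 -> P2 u = 0) ->
  frac_images x x' -> x = 0 -> x' = 0.
Proof.
move=> kerP [u [v [a1 a2 -> ->]]] /eqP; rewrite mulf_eq0 invr_eq0 (negbTE a1) orbF.
by move/eqP/kerP => ->; rewrite mul0r.
Qed.

End FracImages.

Lemma map_mpoly_ker n (R S T : nzRingType) (f : {additive R -> S}) (g : {additive R -> T})
    (q : {mpoly R[n]}) :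
  (forall u, f u = 0 -> g u = 0) -> map_mpoly f q = 0 -> map_mpoly g q = 0.
Proof.
move=> kerfg fq0; apply/mpolyP => m; rewrite mcoeff_map_mpoly mcoeff0; apply: kerfg.
by rewrite -mcoeff_map_mpoly fq0 mcoeff0.
Qed.

Lemma map_mpoly_eq0 n (K : fieldType) (S : nzRingType) (f : {rmorphism K -> S})
    (q : {mpoly K[n]}) :
  (map_mpoly f q == 0) = (q == 0).
Proof.
apply/eqP/eqP => [fq0|->]; last exact: raddf0.
apply/mpolyP => m; have /eqP := congr1 (mcoeff m) fq0.
by rewrite mcoeff_map_mpoly !mcoeff0 fmorph_eq0 => /eqP.
Qed.

Lemma msupp_map_mpoly_sub n (R S : nzRingType) (f : {additive R -> S})
    (q : {mpoly R[n]}) :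
  {subset msupp (map_mpoly f q) <= msupp q}.
Proof.
move=> m; rewrite !mcoeff_msupp mcoeff_map_mpoly.
by apply: contraNneq => ->; rewrite raddf0 eqxx.
Qed.

Section Transfer.
Variables (K K' : fieldType) (iota : {rmorphism K -> K'}) (n : nat) (R : nzRingType).
Variables (kappa : {rmorphism K -> R}) (E : {rmorphism R -> K'}) (F : {rmorphism R -> K}).
Hypotheses (Ekappa : forall c, E (kappa c) = iota c) (Fkappa : forall c, F (kappa c) = c).
Hypothesis kerEF : forall u, E u = 0 -> F u = 0.

Lemma meval_specialize p (g : {mpoly (FF K' n)[p]}) (Y : 'I_p -> FF K' n)
    (u v : 'I_p -> {mpoly R[n]}) :
  (forall m, in_loc_img iota [set: 'I_n] g@_m) -> (forall i, map_mpoly F (v i) != 0) ->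
  (forall i, Y i = (map_mpoly E (u i))%:F / (map_mpoly E (v i))%:F) -> g.@[Y] = 0 ->
  g.@[fun i => (map_mpoly iota (map_mpoly F (u i)))%:F
               / (map_mpoly iota (map_mpoly F (v i)))%:F] = 0.
Proof.
move=> gK Fv YE; rewrite (meval_eq _ YE).
pose P1 : {rmorphism {mpoly R[n]} -> FF K' n} := @FracField.tofrac _ \o map_mpoly E.
pose P2 : {rmorphism {mpoly R[n]} -> FF K' n} :=
  @FracField.tofrac _ \o map_mpoly iota \o map_mpoly F.
have P2_eq0 w : (P2 w == 0) = (map_mpoly F w == 0) by rewrite /= tofrac_eq0 map_mpoly_eq0.
have P1_eq0 w : P1 w = 0 -> map_mpoly F w = 0.
  by move/eqP; rewrite tofrac_eq0 => /eqP; apply: map_mpoly_ker.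
have P1_neq0 w : map_mpoly F w != 0 -> P1 w != 0 by apply: contraNneq => /P1_eq0 ->.
apply: (frac_images_eq0 (P1 := P1) (P2 := P2)).
  by move=> w /P1_eq0 Fw; apply/eqP; rewrite P2_eq0 Fw.
apply: frac_images_meval => [m|i]; last by exists (u i), (v i); rewrite P2_eq0 P1_neq0.
have [c [d [_ _ d0 ->]]] := gK m.
have P1kappa w : P1 (map_mpoly kappa w) = (map_mpoly iota w)%:F.
  by congr (_ %:F); apply/mpolyP => m'; rewrite !mcoeff_map_mpoly; apply: Ekappa.
have Fkappa_mpoly w : map_mpoly F (map_mpoly kappa w) = w.
  by apply/mpolyP => m'; rewrite !mcoeff_map_mpoly; apply: Fkappa.
have d_neq0 : d != 0 by apply: contraNneq d0 => ->; rewrite mcoeff0.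
exists (map_mpoly kappa c), (map_mpoly kappa d).
by rewrite P2_eq0 P1_neq0 Fkappa_mpoly ?d_neq0 // !P1kappa /= !Fkappa_mpoly.
Qed.

End Transfer.

Lemma specialize_fracs (K : closedFieldType) (K' : fieldType) (iota : {rmorphism K -> K'})
    n p (a b : 'I_p -> {mpoly K'[n]}) (mi : 'I_p -> 'X_{1..n}) :
  (forall i, (b i)@_0 != 0) ->
  exists A B : 'I_p -> {mpoly K[n]}, [/\
    forall i, {subset msupp (A i) <= msupp (a i)} /\ {subset msupp (B i) <= msupp (b i)},
    forall i, (B i)@_0 != 0,
    forall i, (a i)@_(mi i) != 0 -> (A i)@_(mi i) != 0 &
    forall g : {mpoly (FF K' n)[p]}, (forall m, in_loc_img iota [set: 'I_n] g@_m) ->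
      g.@[fun i => (a i)%:F / (b i)%:F] = 0 ->
      g.@[fun i => (map_mpoly iota (A i))%:F / (map_mpoly iota (B i))%:F] = 0].
Proof.
move=> b0.
have [r [ts [lift liftK]]] :=
  ipoly_lift_mpoly iota ([seq a i | i <- enum 'I_p] ++ [seq b i | i <- enum 'I_p]).
pose E := ipoly_eval iota ts r.
have liftA i :
    map_mpoly E (lift (a i)) = a i /\ {subset msupp (lift (a i)) <= msupp (a i)}.
  by apply: liftK; rewrite mem_cat map_f ?mem_enum.
have liftB i :
    map_mpoly E (lift (b i)) = b i /\ {subset msupp (lift (b i)) <= msupp (b i)}.
  by apply: liftK; rewrite mem_cat map_f ?mem_enum ?orbT.
pose s := \prod_i (lift (b i))@_0 * \prod_(i | (a i)@_(mi i) != 0) (lift (a i))@_(mi i).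
have Es : E s != 0.
  rewrite rmorphM !rmorph_prod mulf_neq0 //; apply/prodf_neq0 => i.
    by rewrite -mcoeff_map_mpoly (liftB i).1.
  by rewrite -mcoeff_map_mpoly (liftA i).1.
have [F [Fkappa kerEF]] := ipoly_eval_specializable Es.
rewrite rmorphM !rmorph_prod mulf_eq0 negb_or => /andP[/prodf_neq0 Fb /prodf_neq0 Fa].
exists (fun i => map_mpoly F (lift (a i))), (fun i => map_mpoly F (lift (b i))).
split => [i|i|i ai|g gK ab0].
- by split => m /msupp_map_mpoly_sub; [apply: (liftA i).2 | apply: (liftB i).2].
- by rewrite mcoeff_map_mpoly Fb.
- by rewrite mcoeff_map_mpoly Fa.
apply: (meval_specialize (@ipoly_eval_const _ _ iota ts r) Fkappa kerEF gK _ _ ab0) => i.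
  have := Fb i isT; rewrite -mcoeff_map_mpoly.
  by apply: contraTneq => ->; rewrite mcoeff0 eqxx.
by rewrite (liftA i).1 (liftB i).1.
Qed.

Theorem corollary1p3
  (K : closedFieldType) (K' : fieldType) (iota : {rmorphism K -> K'})
  (n p : nat) (J : 'I_p -> {set 'I_n})
  (f : seq {mpoly (FF K' n)[p]})
  (hf : forall g, g \in f -> forall m, in_loc_img iota [set: 'I_n] (g@_m))
  (yhat : 'I_p -> FF K' n)
  (hyhat : forall i, in_loc (J i) (yhat i))
  (hsol : forall g, g \in f -> g.@[yhat] = 0) :
  exists y : 'I_p -> FF K' n,
    [/\ forall i, in_loc_img iota (J i) (y i),
        forall g, g \in f -> g.@[y] = 0 &
        forall i, same_ord (y i) (yhat i)].
Proof.
have /fin_all_exists[ab hab] i : exists ab : {mpoly K'[n]} * {mpoly K'[n]},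
    [/\ vars_in (J i) ab.1, vars_in (J i) ab.2, ab.2@_0 != 0
       & yhat i = ab.1%:F / ab.2%:F].
  by have [a [b h]] := hyhat i; exists (a, b).
pose a i := (ab i).1; pose b i := (ab i).2.
have {}hab i : [/\ vars_in (J i) (a i), vars_in (J i) (b i), (b i)@_0 != 0
                  & yhat i = (a i)%:F / (b i)%:F] := hab i.
have /fin_all_exists[mi mimin] i : exists mi : 'X_{1..n}, a i != 0 ->
    mi \in msupp (a i) /\ {in msupp (a i), forall m, (mdeg mi <= mdeg m)%N}.
  have [->|/msupp_mdeg_min[m ma mmin]] := eqVneq (a i) 0; first by exists 0%MM.
  by exists m.
have b0 i : (b i)@_0 != 0 by case: (hab i).
have [A [B [suppAB B0 Ami solAB]]] := @specialize_fracs _ _ iota n p a b mi b0.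
exists (fun i => (map_mpoly iota (A i))%:F / (map_mpoly iota (B i))%:F); split.
- move=> i; have [va vb _ _] := hab i; have [sA sB] := suppAB i.
  by exists (A i), (B i); split => [m /sA|m /sB||]; [exact: va|exact: vb|exact: B0|].
- move=> g gf; apply: solAB (hf g gf) _; rewrite -(hsol g gf); apply: meval_eq => i.
  by case: (hab i).
- move=> i; have [_ _ _ ->] := hab i; apply: same_ord_frac; first exact: b0.
  + by rewrite mcoeff_map_mpoly fmorph_eq0.
  + by move=> m /msupp_map_mpoly_sub /(suppAB i).1.
  move=> m ma; have [|mia mimin'] := mimin i.
    by apply: contraTneq ma => ->; rewrite msupp0.
  exists (mi i); last exact: mimin'.
  by rewrite mcoeff_msupp mcoeff_map_mpoly fmorph_eq0 Ami // -mcoeff_msupp.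
Qed.
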